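(* Let $M$ be a model of the theory PrA of probability algebras. A nonempty closed set $D\subseteq M$ is definable with parameters from $M$ if and only if $D=[a,b]=\{x\in M: a\le x\le b\}$ for some $a,b\in M$ with $a\le b$.
   Context: PrA is the affine theory in the language $\{\wedge,\vee,{}',0,1,\mu\}$ (with metric $d$) axiomatized by: the axioms of Boolean algebras; $\mu(0)=0$, $\mu(1)=1$; $\mu(x)\le\mu(x\vee y)$; $\mu(x\wedge y)+\mu(x\vee y)=\mu(x)+\mu(y)$; $d(x,y)=\mu(x\triangle y)$. Models are complete metric spaces, so they are measure algebras of probability spaces (Dedekind complete Boolean algebras with a $\sigma$-additive strictly positive probability $\mu$), and $\le$ is the Boolean order. Affine formulas are built from $1$ and atomic formulas using only $r\cdot\phi$ ($r\in\mathbb R$), $\phi+\psi$, $\inf_x$, $\sup_x$. A predicate $P:M\to\mathbb R$ is definable with parameters if it is a uniform limit on $M$ of interpretations of affine formulas with parameters from $M$. A closed $D\subseteq M$ is definable with parameters if $x\mapsto d(x,D)=\inf_{a\in D}d(x,a)$ is definable with parameters. *)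

From HB Require Import structures.
From mathcomp Require Import all_boot all_order all_algebra.
From mathcomp Require Import boolp classical_sets reals Rstruct.
Set Implicit Arguments. Unset Strict Implicit. Unset Printing Implicit Defensive.
Import Order.TTheory GRing.Theory Num.Theory.
Local Open Scope ring_scope.
Local Open Scope classical_set_scope.

Notation RR := Rdefinitions.R.

Record ProbAlgebra := {
  pa_car :> Type;
  pa_meet : pa_car -> pa_car -> pa_car;
  pa_join : pa_car -> pa_car -> pa_car;
  pa_compl : pa_car -> pa_car;
  pa_zero : pa_car;
  pa_one : pa_car;
  pa_mu : pa_car -> RR;
  pa_meetC : forall x y, pa_meet x y = pa_meet y x;
  pa_joinC : forall x y, pa_join x y = pa_join y x;
  pa_meetA : forall x y z, pa_meet x (pa_meet y z) = pa_meet (pa_meet x y) z;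
  pa_joinA : forall x y z, pa_join x (pa_join y z) = pa_join (pa_join x y) z;
  pa_meetKU : forall x y, pa_meet x (pa_join x y) = x;
  pa_joinKI : forall x y, pa_join x (pa_meet x y) = x;
  pa_meetUr : forall x y z,
      pa_meet x (pa_join y z) = pa_join (pa_meet x y) (pa_meet x z);
  pa_joinIr : forall x y z,
      pa_join x (pa_meet y z) = pa_meet (pa_join x y) (pa_join x z);
  pa_meetCr : forall x, pa_meet x (pa_compl x) = pa_zero;
  pa_joinCr : forall x, pa_join x (pa_compl x) = pa_one;
  pa_mu0 : pa_mu pa_zero = 0;
  pa_mu1 : pa_mu pa_one = 1;
  pa_mu_mono : forall x y, pa_mu x <= pa_mu (pa_join x y);
  pa_mu_modular : forall x y,
      pa_mu (pa_meet x y) + pa_mu (pa_join x y) = pa_mu x + pa_mu y;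
  (* d(x,y) := mu (x symdiff y) is a metric (separation) ... *)
  pa_sep : forall x y,
      pa_mu (pa_join (pa_meet x (pa_compl y)) (pa_meet (pa_compl x) y)) = 0 ->
      x = y;
  (* ... and it is complete *)
  pa_complete : forall u : nat -> pa_car,
      (forall eps : RR, 0 < eps -> exists N, forall m n, (N <= m)%N -> (N <= n)%N ->
         pa_mu (pa_join (pa_meet (u m) (pa_compl (u n)))
                        (pa_meet (pa_compl (u m)) (u n))) < eps) ->
      exists l, forall eps : RR, 0 < eps -> exists N, forall n, (N <= n)%N ->
         pa_mu (pa_join (pa_meet (u n) (pa_compl l))
                        (pa_meet (pa_compl (u n)) l)) < eps
}.

Section Basic.
Variable M : ProbAlgebra.
Definition pa_symdiff (x y : M) : M :=
  pa_join (pa_meet x (pa_compl y)) (pa_meet (pa_compl x) y).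
Definition pa_d (x y : M) : RR := pa_mu (pa_symdiff x y).
Definition pa_le (x y : M) : Prop := pa_meet x y = x.
End Basic.

(* Terms of the language {/\, \/, ', 0, 1}, variables as de Bruijn indices. *)
Inductive term :=
| TVar of nat
| TMeet of term & term
| TJoin of term & term
| TCompl of term
| TZero
| TOne.

(* Affine formulas: built from 1 and atomic formulas mu(t), d(t,s)
   using r * phi, phi + psi, inf_x, sup_x (x = de Bruijn index 0). *)
Inductive formula :=
| FOne
| FMu of term
| FDist of term & term
| FScale of RR & formula
| FAdd of formula & formula
| FInf of formula
| FSup of formula.

Definition scons (T : Type) (a : T) (e : nat -> T) : nat -> T :=
  fun n => match n with O => a | S k => e k end.

Fixpoint teval (M : ProbAlgebra) (e : nat -> M) (t : term) : M :=
  match t with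
  | TVar n => e n
  | TMeet t1 t2 => pa_meet (teval e t1) (teval e t2)
  | TJoin t1 t2 => pa_join (teval e t1) (teval e t2)
  | TCompl t1 => pa_compl (teval e t1)
  | TZero => pa_zero M
  | TOne => pa_one M
  end.

(* Interpretation in M (inf/sup over M are the real inf/sup; all formulas
   are bounded on a probability algebra). *)
Fixpoint feval (M : ProbAlgebra) (e : nat -> M) (phi : formula) : RR :=
  match phi with
  | FOne => 1
  | FMu t => pa_mu (teval e t)
  | FDist t s => pa_d (teval e t) (teval e s)
  | FScale r psi => r * feval e psi
  | FAdd psi chi => feval e psi + feval e chi
  | FInf psi => inf [set feval (scons a e) psi | a in [set: M]]
  | FSup psi => sup [set feval (scons a e) psi | a in [set: M]]
  end.

(* P : M -> R is definable with parameters: uniform limit of interpretations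
   of affine formulas phi(x, params) -- x is variable 0, the remaining
   variables are assigned parameters from M by e. *)
Definition definable_pred (M : ProbAlgebra) (P : M -> RR) : Prop :=
  forall eps : RR, 0 < eps ->
    exists (phi : formula) (e : nat -> M),
      forall x : M, `|P x - feval (scons x e) phi| <= eps.

Definition dist_to_set (M : ProbAlgebra) (D : set M) (x : M) : RR :=
  inf [set pa_d x a | a in D].

Definition definable_set (M : ProbAlgebra) (D : set M) : Prop :=
  definable_pred (dist_to_set D).

Definition pa_closed (M : ProbAlgebra) (D : set M) : Prop :=
  forall x : M, (forall eps : RR, 0 < eps -> exists2 a, D a & pa_d x a < eps) -> D x.

Definition pa_interval (M : ProbAlgebra) (a b : M) : set M :=
  [set x | pa_le a x /\ pa_le x b].

From mathcomp Require Import all_boot all_order all_algebra.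
From mathcomp Require Import boolp classical_sets reals Rstruct lra.
Set Implicit Arguments. Unset Strict Implicit. Unset Printing Implicit Defensive.
Import Order.TTheory GRing.Theory Num.Theory.
Local Open Scope ring_scope.
Local Open Scope classical_set_scope.

(* Write [pa_mix c x y] for the element equal to [x] inside [c] and to [y] outside.
   Exchanging parts inside [c], (x, y) |-> (pa_mix c x y, pa_mix c y x), is an
   involution of M x M preserving mu(x) + mu(y) and d(x, x') + d(y, y') and commuting
   with the quantifiers, so every definable predicate P satisfies
   P (pa_mix c x y) + P (pa_mix c y x) = P x + P y.
   For P the distance to D, which is nonnegative and vanishes exactly on the closed
   set D, this makes D closed under mixtures, hence under meets, joins and passing
   to elements in between.  The infimum of mu on D is attained along the running
   meets of a minimizing sequence, which are Cauchy, so completeness gives a least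
   element a of D and dually a greatest one b, and D = [a, b].  Conversely the
   distance to [a, b] is mu(x - b) + mu(a - x), an affine formula. *)

Section ProbAlgebraTheory.
Variable M : ProbAlgebra.
Local Notation "x ⊓ y" := (@pa_meet M x y) (at level 40, left associativity).
Local Notation "x ⊔ y" := (@pa_join M x y) (at level 50, left associativity).
Local Notation "¬ x" := (@pa_compl M x) (at level 35, right associativity).
Local Notation "⊥" := (pa_zero M).
Local Notation "⊤" := (pa_one M).
Local Notation "x ≤ y" := (@pa_le M x y) (at level 70, no associativity).
Implicit Types a b c x y z u v : M.

Lemma pa_meetxx x : x ⊓ x = x.
Proof. by rewrite -{2}[x](pa_joinKI x x) pa_meetKU. Qed.
Lemma pa_joinxx x : x ⊔ x = x.
Proof. by rewrite -{2}[x](pa_meetKU x x) pa_joinKI. Qed.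
Lemma pa_meetx0 x : x ⊓ ⊥ = ⊥.
Proof. by rewrite -(pa_meetCr x) pa_meetA pa_meetxx. Qed.
Lemma pa_meet0x x : ⊥ ⊓ x = ⊥.
Proof. by rewrite pa_meetC pa_meetx0. Qed.
Lemma pa_joinx0 x : x ⊔ ⊥ = x.
Proof. by rewrite -(pa_meetCr x) pa_joinKI. Qed.
Lemma pa_join0x x : ⊥ ⊔ x = x.
Proof. by rewrite pa_joinC pa_joinx0. Qed.
Lemma pa_meetx1 x : x ⊓ ⊤ = x.
Proof. by rewrite -(pa_joinCr x) pa_meetKU. Qed.
Lemma pa_joinx1 x : x ⊔ ⊤ = ⊤.
Proof. by rewrite -(pa_joinCr x) pa_joinA pa_joinxx. Qed.
Lemma pa_join1x x : ⊤ ⊔ x = ⊤.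
Proof. by rewrite pa_joinC pa_joinx1. Qed.
Lemma pa_meetUl x y z : (x ⊔ y) ⊓ z = x ⊓ z ⊔ y ⊓ z.
Proof. by rewrite pa_meetC pa_meetUr (pa_meetC z x) (pa_meetC z y). Qed.
Lemma pa_joinIl x y z : (x ⊓ y) ⊔ z = (x ⊔ z) ⊓ (y ⊔ z).
Proof. by rewrite pa_joinC pa_joinIr (pa_joinC z x) (pa_joinC z y). Qed.
Lemma pa_meetCl x : ¬ x ⊓ x = ⊥.
Proof. by rewrite pa_meetC pa_meetCr. Qed.
Lemma pa_joinCl x : ¬ x ⊔ x = ⊤.
Proof. by rewrite pa_joinC pa_joinCr. Qed.
Lemma pa_meetACA a b c u : (a ⊓ b) ⊓ (c ⊓ u) = (a ⊓ c) ⊓ (b ⊓ u).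
Proof. by rewrite -!pa_meetA (pa_meetA b c u) (pa_meetC b c) -(pa_meetA c b u). Qed.
Lemma pa_meetAC a b c : a ⊓ b ⊓ c = a ⊓ c ⊓ b.
Proof. by rewrite -!pa_meetA (pa_meetC b c). Qed.
Lemma pa_meetCA a b c : a ⊓ (b ⊓ c) = b ⊓ (a ⊓ c).
Proof. by rewrite !pa_meetA (pa_meetC a b). Qed.
Lemma pa_joinCA a b c : a ⊔ (b ⊔ c) = b ⊔ (a ⊔ c).
Proof. by rewrite !pa_joinA (pa_joinC a b). Qed.

Lemma pa_compl_unique x y : x ⊓ y = ⊥ -> x ⊔ y = ⊤ -> y = ¬ x.
Proof.
move=> xy0 xy1.
have -> : y = y ⊓ ¬ x.
  by rewrite -{1}[y]pa_meetx1 -(pa_joinCr x) pa_meetUr pa_meetC xy0 pa_join0x.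
by rewrite -{2}[¬ x]pa_meetx1 -xy1 pa_meetUr pa_meetCl pa_join0x pa_meetC.
Qed.
Lemma pa_complK x : ¬ ¬ x = x.
Proof. by rewrite -(pa_compl_unique (pa_meetCl x) (pa_joinCl x)). Qed.
Lemma pa_complI x y : ¬ (x ⊓ y) = ¬ x ⊔ ¬ y.
Proof.
symmetry; apply: pa_compl_unique.
  rewrite pa_meetUr pa_meetAC pa_meetCr pa_meet0x pa_join0x.
  by rewrite -pa_meetA pa_meetCr pa_meetx0.
rewrite pa_joinIl (pa_joinA x) pa_joinCr pa_join1x (pa_joinCA y) pa_joinCr.
by rewrite pa_joinx1 pa_meetxx.
Qed.
Lemma pa_complU x y : ¬ (x ⊔ y) = ¬ x ⊓ ¬ y.
Proof. by rewrite -{1}[x]pa_complK -{1}[y]pa_complK -pa_complI pa_complK. Qed.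

Lemma pa_meet_splitC c x : x = x ⊓ c ⊔ x ⊓ ¬ c.
Proof. by rewrite -pa_meetUr pa_joinCr pa_meetx1. Qed.
Lemma pa_eq_splitC c x y : x ⊓ c = y ⊓ c -> x ⊓ ¬ c = y ⊓ ¬ c -> x = y.
Proof. by move=> eqc eqnc; rewrite (pa_meet_splitC c x) (pa_meet_splitC c y) eqc eqnc. Qed.

Lemma pa_lexx x : x ≤ x.
Proof. exact: pa_meetxx. Qed.
Lemma pa_le_trans x y z : x ≤ y -> y ≤ z -> x ≤ z.
Proof. by rewrite /pa_le => xy yz; rewrite -xy -pa_meetA yz. Qed.
Lemma pa_meet_lel x y : x ⊓ y ≤ x.
Proof. by rewrite /pa_le pa_meetAC pa_meetxx. Qed.
Lemma pa_meet_ler x y : x ⊓ y ≤ y.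
Proof. by rewrite pa_meetC; apply: pa_meet_lel. Qed.
Lemma pa_le_meet2 a b c u : a ≤ b -> c ≤ u -> a ⊓ c ≤ b ⊓ u.
Proof. by rewrite /pa_le => ab cu; rewrite pa_meetACA ab cu. Qed.
Lemma pa_le_join x y : x ≤ y -> x ⊔ y = y.
Proof. by rewrite /pa_le => xy; rewrite -xy pa_joinC pa_meetC pa_joinKI. Qed.
Lemma pa_le_compl x y : x ≤ y -> ¬ y ≤ ¬ x.
Proof. by move=> xy; rewrite /pa_le -pa_complU pa_joinC pa_le_join. Qed.

Local Notation mu := (@pa_mu M).
Local Notation d := (@pa_d M).

Lemma pa_mu_ge0 x : 0 <= mu x.
Proof. by have := pa_mu_mono ⊥ x; rewrite pa_join0x pa_mu0. Qed.
Lemma pa_mu_le x y : x ≤ y -> mu x <= mu y.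
Proof. by move=> xy; have := pa_mu_mono x y; rewrite pa_le_join. Qed.
Lemma pa_mu_le1 x : mu x <= 1.
Proof. by have := pa_mu_mono x (¬ x); rewrite pa_joinCr pa_mu1. Qed.
Lemma pa_mu_disjoint x y : x ⊓ y = ⊥ -> mu (x ⊔ y) = mu x + mu y.
Proof. by move=> xy0; have := pa_mu_modular x y; rewrite xy0 pa_mu0 add0r. Qed.
Lemma pa_mu_splitC c x : mu x = mu (x ⊓ c) + mu (x ⊓ ¬ c).
Proof.
rewrite {1}(pa_meet_splitC c x) pa_mu_disjoint //.
by rewrite pa_meetACA pa_meetxx pa_meetCr pa_meetx0.
Qed.

Lemma pa_dE x y : d x y = mu (x ⊓ ¬ y) + mu (¬ x ⊓ y).
Proof.
rewrite /pa_d /pa_symdiff pa_mu_disjoint //.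
by rewrite pa_meetACA pa_meetCr pa_meetCl pa_meetxx.
Qed.
Lemma pa_d_ge0 x y : 0 <= d x y.
Proof. by rewrite pa_dE addr_ge0 ?pa_mu_ge0. Qed.
Lemma pa_dC x y : d x y = d y x.
Proof. by rewrite !pa_dE addrC (pa_meetC (¬ y)) (pa_meetC y). Qed.
Lemma pa_dxx x : d x x = 0.
Proof. by rewrite pa_dE pa_meetCr pa_meetCl pa_mu0 addr0. Qed.
Lemma pa_d_eq0 x y : d x y = 0 -> x = y.
Proof. exact: pa_sep. Qed.
Lemma pa_d_compl x y : d (¬ x) (¬ y) = d x y.
Proof. by rewrite !pa_dE !pa_complK addrC (pa_meetC (¬ x)) (pa_meetC x). Qed.
Lemma pa_d_le x y : y ≤ x -> d x y = mu x - mu y.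
Proof.
move=> yx; rewrite pa_dE -{2}yx pa_meetCA pa_meetCl pa_meetx0 pa_mu0 addr0.
rewrite (pa_mu_splitC y x) (pa_meetC x y) yx; lra.
Qed.
Lemma pa_mu_lipschitz x y : mu x <= mu y + d y x.
Proof.
rewrite (pa_mu_splitC y x) pa_dE (pa_meetC (¬ y) x).
have := pa_mu_le (pa_meet_lel y x); rewrite pa_meetC.
have := pa_mu_ge0 (y ⊓ ¬ x); lra.
Qed.

Definition pa_mix c u v := u ⊓ c ⊔ v ⊓ ¬ c.

Lemma pa_mixI c u v : pa_mix c u v ⊓ c = u ⊓ c.
Proof. by rewrite pa_meetUl -!pa_meetA pa_meetxx pa_meetCl pa_meetx0 pa_joinx0. Qed.
Lemma pa_mixIC c u v : pa_mix c u v ⊓ ¬ c = v ⊓ ¬ c.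
Proof. by rewrite pa_meetUl -!pa_meetA pa_meetxx pa_meetCr pa_meetx0 pa_join0x. Qed.
Lemma pa_mixxx c u : pa_mix c u u = u.
Proof. by apply: (@pa_eq_splitC c); rewrite ?pa_mixI ?pa_mixIC. Qed.
Lemma pa_mixK c u v : pa_mix c (pa_mix c u v) (pa_mix c v u) = u.
Proof. by apply: (@pa_eq_splitC c); rewrite ?pa_mixI ?pa_mixIC. Qed.

Lemma pa_meet_mix c u1 v1 u2 v2 :
  pa_mix c u1 v1 ⊓ pa_mix c u2 v2 = pa_mix c (u1 ⊓ u2) (v1 ⊓ v2).
Proof.
have meetI_distr a b e : a ⊓ b ⊓ e = (a ⊓ e) ⊓ (b ⊓ e) by rewrite pa_meetACA pa_meetxx.
by apply: (@pa_eq_splitC c); rewrite meetI_distr ?pa_mixI ?pa_mixIC -meetI_distr.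
Qed.
Lemma pa_join_mix c u1 v1 u2 v2 :
  pa_mix c u1 v1 ⊔ pa_mix c u2 v2 = pa_mix c (u1 ⊔ u2) (v1 ⊔ v2).
Proof. by apply: (@pa_eq_splitC c); rewrite pa_meetUl ?pa_mixI ?pa_mixIC -pa_meetUl. Qed.
Lemma pa_compl_mix c u v : ¬ pa_mix c u v = pa_mix c (¬ u) (¬ v).
Proof.
have complI_meet e x : ¬ x ⊓ e = ¬ (x ⊓ e) ⊓ e.
  by rewrite pa_complI pa_meetUl pa_meetCl pa_joinx0.
by apply: (@pa_eq_splitC c); rewrite complI_meet ?pa_mixI ?pa_mixIC -complI_meet.
Qed.

Lemma pa_mix_join x y : pa_mix x x y = x ⊔ y.
Proof.
apply: (@pa_eq_splitC x); rewrite ?pa_mixI ?pa_mixIC pa_meetUl.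
  by rewrite pa_meetxx pa_meetC pa_joinKI.
by rewrite pa_meetCr pa_join0x.
Qed.
Lemma pa_mix_meet x y : pa_mix x y x = y ⊓ x.
Proof.
apply: (@pa_eq_splitC x); rewrite ?pa_mixI ?pa_mixIC -pa_meetA.
  by rewrite pa_meetxx.
by rewrite pa_meetCr pa_meetx0.
Qed.
Lemma pa_mix_between a b z : a ≤ z -> z ≤ b -> pa_mix z b a = z.
Proof.
move=> az zb; apply: (@pa_eq_splitC z); rewrite ?pa_mixI ?pa_mixIC.
  by rewrite pa_meetC zb pa_meetxx.
by rewrite pa_meetCr -[a]az -pa_meetA pa_meetCr pa_meetx0.
Qed.

Lemma pa_mu_mix_exch c u v : mu (pa_mix c u v) + mu (pa_mix c v u) = mu u + mu v.
Proof.
rewrite (pa_mu_splitC c (pa_mix c u v)) (pa_mu_splitC c (pa_mix c v u)).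
rewrite !pa_mixI !pa_mixIC (pa_mu_splitC c u) (pa_mu_splitC c v); lra.
Qed.
Lemma pa_d_mix_exch c u1 v1 u2 v2 :
  d (pa_mix c u1 v1) (pa_mix c u2 v2) + d (pa_mix c v1 u1) (pa_mix c v2 u2) =
  d u1 u2 + d v1 v2.
Proof. by rewrite /pa_d /pa_symdiff !pa_compl_mix !pa_meet_mix !pa_join_mix pa_mu_mix_exch. Qed.

Lemma pa_d_interval_ge a b x y : a ≤ y -> y ≤ b ->
  mu (x ⊓ ¬ b) + mu (¬ x ⊓ a) <= d x y.
Proof.
move=> ay yb; rewrite pa_dE lerD //; apply/pa_mu_le/pa_le_meet2;
  by [apply: pa_lexx | apply: pa_le_compl | ].
Qed.
(* [(x ⊔ a) ⊓ b] is the point of [[a, b]] nearest to [x]. *)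
Lemma pa_d_interval_clamp a b x : a ≤ b ->
  d x ((x ⊔ a) ⊓ b) = mu (x ⊓ ¬ b) + mu (¬ x ⊓ a).
Proof.
move=> ab; rewrite pa_dE pa_complI pa_complU pa_meetUr pa_meetA pa_meetCr.
rewrite pa_meet0x pa_join0x pa_meetA pa_meetUr pa_meetCl pa_join0x -pa_meetA.
by rewrite ab.
Qed.
End ProbAlgebraTheory.

Section SupInfOfImage.
Variables (T : Type) (t0 : T).
Implicit Types f g h k : T -> RR.
Local Notation img f := [set f a | a in [set: T]].

Lemma sup_img_ge f B a : (forall a, f a <= B) -> f a <= sup (img f).
Proof.
move=> fB; apply: sup_upper_bound; last by exists a.
by split; [exists (f t0), t0 | exists B => _ [b _ <-]].
Qed.
Lemma sup_img_le f B : (forall a, f a <= B) -> sup (img f) <= B.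
Proof. by move=> fB; apply: ge_sup; [exists (f t0), t0 | move=> _ [a _ <-]]. Qed.
Lemma inf_img_le f B a : (forall a, B <= f a) -> inf (img f) <= f a.
Proof. by move=> Bf; apply: ge_inf; [exists B => _ [b _ <-] | exists a]. Qed.
Lemma inf_img_ge f B : (forall a, B <= f a) -> B <= inf (img f).
Proof. by move=> Bf; apply: lb_le_inf; [exists (f t0), t0 | move=> _ [a _ <-]]. Qed.

Lemma sup_imgD_le f g h k B :
  (forall a, f a <= B) -> (forall a, g a <= B) ->
  (forall a, h a <= B) -> (forall a, k a <= B) ->
  (forall a b, exists a' b', f a + g b <= h a' + k b') ->
  sup (img f) + sup (img g) <= sup (img h) + sup (img k).
Proof.
move=> fB gB hB kB dom; apply/ler_addgt0Pr => e e0.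
have e2 : 0 < e / 2 by rewrite divr_gt0.
have has_supB l : (forall a, l a <= B) -> has_sup (img l).
  by move=> lB; split; [exists (l t0), t0 | exists B => _ [a _ <-]].
have [_ [a _ <-] fa] := sup_adherent e2 (has_supB _ fB).
have [_ [b _ <-] gb] := sup_adherent e2 (has_supB _ gB).
have [a' [b' fgab]] := dom a b.
have := sup_img_ge a' hB; have := sup_img_ge b' kB; lra.
Qed.
Lemma inf_imgD_ge f g h k B :
  (forall a, B <= f a) -> (forall a, B <= g a) ->
  (forall a, B <= h a) -> (forall a, B <= k a) ->
  (forall a b, exists a' b', h a' + k b' <= f a + g b) ->
  inf (img h) + inf (img k) <= inf (img f) + inf (img g).
Proof.
move=> Bf Bg Bh Bk dom; apply/ler_addgt0Pr => e e0.
have e2 : 0 < e / 2 by rewrite divr_gt0.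
have has_infB l : (forall a, B <= l a) -> has_inf (img l).
  by move=> Bl; split; [exists (l t0), t0 | exists B => _ [a _ <-]].
have [_ [a _ <-] fa] := inf_adherent e2 (has_infB _ Bf).
have [_ [b _ <-] gb] := inf_adherent e2 (has_infB _ Bg).
have [a' [b' hkab]] := dom a b.
have := inf_img_le a' Bh; have := inf_img_le b' Bk; lra.
Qed.
Lemma sup_imgD_eq f g h k B :
  (forall a, f a <= B) -> (forall a, g a <= B) ->
  (forall a, h a <= B) -> (forall a, k a <= B) ->
  (forall a b, exists a' b', h a' + k b' = f a + g b) ->
  (forall a b, exists a' b', f a' + g b' = h a + k b) ->
  sup (img h) + sup (img k) = sup (img f) + sup (img g).
Proof.
move=> fB gB hB kB hk fg; apply/le_anti/andP; split; apply: sup_imgD_le => // a b.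
  by have [a' [b' <-]] := fg a b; exists a', b'.
by have [a' [b' <-]] := hk a b; exists a', b'.
Qed.
Lemma inf_imgD_eq f g h k B :
  (forall a, B <= f a) -> (forall a, B <= g a) ->
  (forall a, B <= h a) -> (forall a, B <= k a) ->
  (forall a b, exists a' b', h a' + k b' = f a + g b) ->
  (forall a b, exists a' b', f a' + g b' = h a + k b) ->
  inf (img h) + inf (img k) = inf (img f) + inf (img g).
Proof.
move=> Bf Bg Bh Bk hk fg; apply/le_anti/andP; split; apply: inf_imgD_ge => // a b.
  by have [a' [b' <-]] := hk a b; exists a', b'.
by have [a' [b' <-]] := fg a b; exists a', b'.
Qed.
End SupInfOfImage.

Section AffineFormulas.
Variable M : ProbAlgebra.
Implicit Types (c x y : M) (e f : nat -> M) (phi : formula).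

Definition pa_mix_env c e f : nat -> M := fun n => pa_mix c (e n) (f n).

Lemma pa_mix_env_scons c x y e f :
  pa_mix_env c (scons x e) (scons y f) = scons (pa_mix c x y) (pa_mix_env c e f).
Proof. by apply: funext => -[|n]. Qed.
Lemma pa_mix_envxx c e : pa_mix_env c e e = e.
Proof. by apply: funext => n; rewrite /pa_mix_env pa_mixxx. Qed.

Lemma teval_mix c e f t :
  teval (pa_mix_env c e f) t = pa_mix c (teval e t) (teval f t).
Proof.
elim: t => [n|t1 IH1 t2 IH2|t1 IH1 t2 IH2|t1 IH1||] /=.
- by [].
- by rewrite IH1 IH2 pa_meet_mix.
- by rewrite IH1 IH2 pa_join_mix.
- by rewrite IH1 pa_compl_mix.
- by rewrite pa_mixxx.
- by rewrite pa_mixxx.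
Qed.

Lemma feval_bounded phi : exists B, forall e, - B <= feval e phi <= B.
Proof.
elim: phi => [|t|t s|r psi [B psiB]|psi [B1 psiB] chi [B2 chiB]|psi [B psiB]|psi [B psiB]].
- by exists 1 => e; rewrite -ler_norml normr1.
- by exists 1 => e; rewrite -ler_norml ger0_norm ?pa_mu_ge0 ?pa_mu_le1.
- by exists 1 => e; rewrite -ler_norml /= /pa_d ger0_norm ?pa_mu_ge0 ?pa_mu_le1.
- by exists (`|r| * B) => e; rewrite -ler_norml normrM ler_wpM2l // ler_norml.
- exists (B1 + B2) => e; rewrite -ler_norml (le_trans (ler_normD _ _)) //.
  by rewrite lerD // ler_norml.
all: exists B => e /=.
all: have lo a : - B <= feval (scons a e) psi by case/andP: (psiB (scons a e)).
all: have hi a : feval (scons a e) psi <= B by case/andP: (psiB (scons a e)).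
- rewrite (inf_img_ge (pa_zero M) lo) /=.
  exact: le_trans (inf_img_le (pa_zero M) lo) (hi _).
- rewrite (sup_img_le (pa_zero M) hi) andbT.
  exact: le_trans (lo (pa_zero M)) (sup_img_ge (pa_zero M) (pa_zero M) hi).
Qed.

Lemma feval_mix_exch c phi e f :
  feval (pa_mix_env c e f) phi + feval (pa_mix_env c f e) phi = feval e phi + feval f phi.
Proof.
elim: phi e f => [|t|t s|r psi IH|psi IH1 chi IH2|psi IH|psi IH] e f /=.
- by [].
- by rewrite !teval_mix pa_mu_mix_exch.
- by rewrite !teval_mix pa_d_mix_exch.
- by rewrite -!mulrDr IH.
- by rewrite addrACA IH1 IH2 addrACA.
all: have [B psiB] := feval_bounded psi.
all: have lo (g : nat -> M) (a : M) : - B <= feval (scons a g) psi by case/andP: (psiB (scons a g)).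
all: have hi (g : nat -> M) (a : M) : feval (scons a g) psi <= B by case/andP: (psiB (scons a g)).
all: have to_mix a b : exists a' b',
    feval (scons a' (pa_mix_env c e f)) psi + feval (scons b' (pa_mix_env c f e)) psi =
    feval (scons a e) psi + feval (scons b f) psi
  by exists (pa_mix c a b), (pa_mix c b a);
     rewrite -(IH (scons a e) (scons b f)) !pa_mix_env_scons.
all: have of_mix a b : exists a' b',
    feval (scons a' e) psi + feval (scons b' f) psi =
    feval (scons a (pa_mix_env c e f)) psi + feval (scons b (pa_mix_env c f e)) psi
  by exists (pa_mix c a b), (pa_mix c b a);
     rewrite -(IH (scons (pa_mix c a b) e) (scons (pa_mix c b a) f)) !pa_mix_env_scons !pa_mixK.
- exact: (inf_imgD_eq (pa_zero M) (lo _) (lo _) (lo _) (lo _) to_mix of_mix).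
- exact: (sup_imgD_eq (pa_zero M) (hi _) (hi _) (hi _) (hi _) to_mix of_mix).
Qed.

Lemma definable_pred_mix_exch (P : M -> RR) : definable_pred P ->
  forall c x y, P (pa_mix c x y) + P (pa_mix c y x) = P x + P y.
Proof.
move=> defP c x y; apply/eqP; rewrite -subr_eq0 -normr_le0.
apply/ler_addgt0Pr => e e0; rewrite add0r.
have e4 : 0 < e / 4 by rewrite divr_gt0.
have [phi [env approx]] := defP _ e4.
have := feval_mix_exch c phi (scons x env) (scons y env).
rewrite !pa_mix_env_scons pa_mix_envxx.
move: (approx x) (approx y) (approx (pa_mix c x y)) (approx (pa_mix c y x)).
rewrite !ler_norml => /andP[? ?] /andP[? ?] /andP[? ?] /andP[? ?] exch.
apply/andP; split; lra.
Qed.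
End AffineFormulas.

Section ClosedSets.
Variable M : ProbAlgebra.
Local Notation mu := (@pa_mu M).
Implicit Types (D : set M) (a b c l x y z : M) (u : nat -> M).

Definition pa_cvg_to u l := forall eps : RR, 0 < eps ->
  exists N, forall n, (N <= n)%N -> pa_d (u n) l < eps.

Lemma pa_closed_cvg D u l : pa_closed D -> (forall n, D (u n)) -> pa_cvg_to u l -> D l.
Proof.
move=> closedD Du ul; apply: closedD => eps e0.
by have [N uN] := ul eps e0; exists (u N); rewrite // pa_dC uN.
Qed.

Lemma pa_cvg_decreasing u m :
  (forall n, pa_le (u n.+1) (u n)) ->
  (forall n, m <= mu (u n) < m + n.+1%:R^-1) ->
  exists2 l, pa_cvg_to u l & mu l <= m.
Proof.
move=> decr mu_u.
have inv_le k n : (k <= n)%N -> (n.+1%:R^-1 : RR) <= k.+1%:R^-1.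
  by move=> kn; rewrite lef_pV2 ?posrE ?ltr0Sn // ler_nat ltnS.
have anti k n : (k <= n)%N -> pa_le (u n) (u k).
  move/subnKC <-; elim: (n - k)%N => [|j IH]; first by rewrite addn0; apply: pa_lexx.
  by rewrite addnS; apply: pa_le_trans (decr _) IH.
have cauchy N n1 n2 : (N <= n1)%N -> (N <= n2)%N -> pa_d (u n1) (u n2) < N.+1%:R^-1.
  wlog n12 : n1 n2 / (n1 <= n2)%N.
    move=> W Nn1 Nn2; case: (leqP n1 n2) => n12; first exact: W.
    by rewrite pa_dC; apply: W => //; apply: ltnW.
  move=> Nn1 _; rewrite pa_d_le; last exact: anti.
  have := mu_u n1; have := mu_u n2; have := inv_le _ _ Nn1.
  move: (n1.+1%:R^-1) (N.+1%:R^-1) => p q pq /andP[? _] /andP[_ ?]; lra.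
have [l ul] : exists l, pa_cvg_to u l.
  apply: pa_complete => eps e0.
  have [N] := ltr_add_invr e0; rewrite add0r => Neps.
  by exists N => n1 n2 Nn1 Nn2; apply: lt_trans (cauchy _ _ _ Nn1 Nn2) Neps.
exists l => //; apply/ler_addgt0Pr => eps e0.
have e2 : 0 < eps / 2 by rewrite divr_gt0.
have [N uN] := ul _ e2; have [K] := ltr_add_invr e2; rewrite add0r => Keps.
have [n Nn Kn] : exists2 n, (N <= n)%N & (K <= n)%N.
  by exists (maxn N K); rewrite ?leq_maxl ?leq_maxr.
have := pa_mu_lipschitz l (u n); have := uN n Nn.
have := mu_u n; have := inv_le _ _ Kn; move: Keps.
move: (n.+1%:R^-1) (K.+1%:R^-1) => p q qeps pq /andP[_ ?]; lra.
Qed.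

Fixpoint pa_prefix_meet u n : M :=
  if n is k.+1 then pa_meet (pa_prefix_meet u k) (u n) else u 0%N.

Lemma pa_mu_min_attained D : D !=set0 -> pa_closed D ->
  (forall x y, D x -> D y -> D (pa_meet x y)) ->
  exists2 l, D l & forall z, D z -> mu l <= mu z.
Proof.
move=> [x0 Dx0] closedD meetD.
have infD : has_inf [set mu x | x in D].
  by split; [exists (mu x0), x0 | exists 0 => _ [x _ <-]; apply: pa_mu_ge0].
set m := inf [set mu x | x in D].
have m_le z : D z -> m <= mu z by move=> Dz; apply: (ge_inf infD.2); exists z.
have /choice[x xP] n : exists x, D x /\ mu x < m + n.+1%:R^-1.
  have pos : 0 < n.+1%:R^-1 :> RR by rewrite invr_gt0 ltr0Sn.
  by have [_ [x Dx <-] ?] := inf_adherent pos infD; exists x.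
pose u := pa_prefix_meet x.
have Du n : D (u n) by elim: n => [|n IH]; [apply: (xP 0%N).1 | apply: meetD IH (xP _).1].
have u_le_x n : pa_le (u n) (x n) by case: n => [|n]; [apply: pa_lexx | apply: pa_meet_ler].
have [l ul mu_l] : exists2 l, pa_cvg_to u l & mu l <= m.
  apply: pa_cvg_decreasing => n; first exact: pa_meet_lel.
  by rewrite m_le //= (le_lt_trans (pa_mu_le (u_le_x n)) (xP n).2).
exists l => [|z Dz]; first exact: pa_closed_cvg Du ul.
exact: le_trans mu_l (m_le _ Dz).
Qed.

Lemma pa_mu_min_least D l : (forall x y, D x -> D y -> D (pa_meet x y)) ->
  D l -> (forall z, D z -> mu l <= mu z) -> forall z, D z -> pa_le l z.
Proof.
move=> meetD Dl l_min z Dz; apply/esym/pa_d_eq0/le_anti.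
rewrite pa_d_ge0 andbT pa_d_le; last exact: pa_meet_lel.
by have := l_min _ (meetD _ _ Dl Dz); lra.
Qed.

Lemma pa_least_mem D : D !=set0 -> pa_closed D ->
  (forall x y, D x -> D y -> D (pa_meet x y)) ->
  exists2 l, D l & forall z, D z -> pa_le l z.
Proof.
move=> D0 closedD meetD; have [l Dl l_min] := pa_mu_min_attained D0 closedD meetD.
by exists l => //; apply: pa_mu_min_least.
Qed.

Lemma pa_greatest_mem D : D !=set0 -> pa_closed D ->
  (forall x y, D x -> D y -> D (pa_join x y)) ->
  exists2 u, D u & forall z, D z -> pa_le z u.
Proof.
move=> [x0 Dx0] closedD joinD; pose D' := [set x | D (pa_compl x)].
have D'0 : D' !=set0 by exists (pa_compl x0); rewrite /D' /= pa_complK.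
have closedD' : pa_closed D'.
  move=> x x_adh; apply: closedD => eps e0; have [a D'a xa] := x_adh eps e0.
  by exists (pa_compl a); rewrite ?pa_d_compl.
have meetD' x y : D' x -> D' y -> D' (pa_meet x y).
  by rewrite /D' /= pa_complI; apply: joinD.
have [l D'l l_least] := pa_least_mem D'0 closedD' meetD'.
exists (pa_compl l) => // z Dz.
by rewrite -[z]pa_complK; apply/pa_le_compl/l_least; rewrite /D' /= pa_complK.
Qed.
End ClosedSets.


Section DefinableSets.
Variable M : ProbAlgebra.
Local Notation mu := (@pa_mu M).
Implicit Types (D : set M) (a b c x y z : M).

Lemma dist_to_set_ge0 D x : D !=set0 -> 0 <= dist_to_set D x.
Proof.
move=> [a Da]; apply: lb_le_inf; first by exists (pa_d x a), a.
by move=> _ [b _ <-]; apply: pa_d_ge0.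
Qed.

Lemma dist_to_set_mem D x : D x -> dist_to_set D x = 0.
Proof.
move=> Dx; apply/le_anti; rewrite dist_to_set_ge0 ?andbT; last by exists x.
rewrite -(pa_dxx x); apply: ge_inf; last by exists x.
by exists 0 => _ [b _ <-]; apply: pa_d_ge0.
Qed.

Lemma dist_to_set_le0 D x : D !=set0 -> pa_closed D -> dist_to_set D x <= 0 -> D x.
Proof.
move=> [a0 Da0] closedD dx0; apply: closedD => eps e0.
have infD : has_inf [set pa_d x a | a in D].
  by split; [exists (pa_d x a0), a0 | exists 0 => _ [b _ <-]; apply: pa_d_ge0].
have [_ [a Da <-] xa] := inf_adherent e0 infD.
by exists a => //; rewrite /dist_to_set in dx0; lra.
Qed.

Lemma definable_set_mix D c x y : D !=set0 -> pa_closed D -> definable_set D ->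
  D x -> D y -> D (pa_mix c x y).
Proof.
move=> D0 closedD defD Dx Dy; apply: dist_to_set_le0 => //.
have := definable_pred_mix_exch defD c x y.
rewrite (dist_to_set_mem Dx) (dist_to_set_mem Dy) addr0.
by have := dist_to_set_ge0 (pa_mix c y x) D0; lra.
Qed.

Lemma definable_set_interval D : D !=set0 -> pa_closed D -> definable_set D ->
  exists a b, pa_le a b /\ D = pa_interval a b.
Proof.
move=> D0 closedD defD.
have mixD c x y : D x -> D y -> D (pa_mix c x y) by apply: definable_set_mix.
have [a Da a_least] : exists2 a, D a & forall z, D z -> pa_le a z.
  by apply: pa_least_mem => // x y Dx Dy; rewrite -pa_mix_meet; apply: mixD.
have [b Db b_greatest] : exists2 b, D b & forall z, D z -> pa_le z b.
  by apply: pa_greatest_mem => // x y Dx Dy; rewrite -pa_mix_join; apply: mixD.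
exists a, b; split; first exact: a_least.
apply/seteqP; split => [z Dz | z [az zb]]; first by split; [apply: a_least | apply: b_greatest].
by rewrite -(pa_mix_between az zb); apply: mixD.
Qed.

Lemma dist_to_interval a b x : pa_le a b ->
  dist_to_set (pa_interval a b) x = mu (pa_meet x (pa_compl b)) + mu (pa_meet (pa_compl x) a).
Proof.
move=> ab; apply/le_anti/andP; split.
  rewrite -(pa_d_interval_clamp x ab); apply: ge_inf.
    by exists 0 => _ [y _ <-]; apply: pa_d_ge0.
  exists (pa_meet (pa_join x a) b) => //; split; last by rewrite /pa_le -pa_meetA pa_meetxx.
  by rewrite /pa_le pa_meetA (pa_joinC x) pa_meetKU.
apply: lb_le_inf; first by exists (pa_d x a), a; split; [apply: pa_lexx |].
by move=> _ [y [ay yb] <-]; apply: pa_d_interval_ge.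
Qed.

Lemma interval_definable a b : pa_le a b -> definable_set (pa_interval a b).
Proof.
move=> ab eps e0.
exists (FAdd (FMu (TMeet (TVar 0) (TCompl (TVar 2)))) (FMu (TMeet (TCompl (TVar 0)) (TVar 1)))).
exists (scons a (scons b (fun _ => a))) => x.
by rewrite dist_to_interval //= subrr normr0 ltW.
Qed.
End DefinableSets.

Theorem mainTheorem6 (M : ProbAlgebra) (D : set M) :
  D !=set0 -> pa_closed D ->
  (definable_set D <->
   exists a b : M, pa_le a b /\ D = pa_interval a b).
Proof.
move=> D0 closedD; split; first exact: definable_set_interval.
by move=> [a [b [ab ->]]]; apply: interval_definable.
Qed.
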